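(* Let $Q_{n,m}$ be as defined in the context. Every code of $Q_{n,m}$ has dimension at most $\lceil n/(m+1)\rceil$.
   Context: A quantum graph $G$ consists of a finite-dimensional complex inner product space $V(G)$ and a real vector space $E(G)$ of self-adjoint operators on $V(G)$ containing the identity $I$; write $|G|=\dim V(G)$ and $\|G\|=\dim E(G)-1$. A code of $G$ is a subspace $C\subseteq V(G)$ such that there is a function $\epsilon_C:E(G)\to\mathbb{R}$ with $P_CAP_C=\epsilon_C(A)P_C$ for all $A\in E(G)$, where $P_C$ is the orthogonal projection onto $C$. Let $n\ge 2$ and $1\le m\le n-1$ be integers. $Q_{n,m}$ denotes any quantum graph with $|Q_{n,m}|=n$, $\|Q_{n,m}\|=m$, such that: (i) $E(Q_{n,m})$ is commutative; (ii) (tropical) $E(Q_{n,m})$ has a basis $\{I,A_1,\dots,A_m\}$ and there is an orthonormal basis of $V(Q_{n,m})$ of common eigenvectors of the $A_i$ such that, writing the eigenvalues of $A_i$ in decreasing order $\lambda_{i,1},\dots,\lambda_{i,n}$ with corresponding common eigenvectors $w_{i,1},\dots,w_{i,n}$, one has $0<\lambda_{i,j+1}<\lambda_{i,j}/n^2$ for all $i$ and $1\le j<n$; (iii) (cyclical) for $1\le i<m$ and all $j$, $w_{i+1,j}=w_{i,j+s_i}$, with the second index taken modulo $n$ in $\{1,\dots,n\}$, where $s_i=\lfloor n/m\rfloor+1$ if $1\le i\le (n\bmod m)$ and $s_i=\lfloor n/m\rfloor$ otherwise; (iv) the common eigenvectors are enumerated as $w_1,\dots,w_n$ (each common eigenvector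 exactly once) so that for every $l\in\{1,\dots,n\}$ one has $w_l=w_{i,\lceil l/m\rceil}$ for some $i\in\{1,\dots,m\}$. *)

(* Complex scalars: any numClosedFieldType R (e.g. algC). *)
From HB Require Import structures.
From mathcomp Require Import all_boot all_order all_algebra.
Set Implicit Arguments. Unset Strict Implicit. Unset Printing Implicit Defensive.
Import Order.TTheory GRing.Theory Num.Theory.
Local Open Scope ring_scope.

(* Conventions: V(G) = R^n (rows), vectors are row vectors, operators act by
   v |-> v *m A, inner product <v, w> = v *m (adjmx w). *)

Definition adjmx (R : numClosedFieldType) p q (A : 'M[R]_(p, q)) : 'M[R]_(q, p) :=
  map_mx Num.conj A^T.

Definition selfadj (R : numClosedFieldType) n (A : 'M[R]_n) : Prop := adjmx A = A.

Definition qbasis (R : numClosedFieldType) n (A : nat -> 'M[R]_n) (i : nat) : 'M[R]_n :=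
  if i == 0%N then 1%:M else A i.

Definition qspan (R : numClosedFieldType) n m (A : nat -> 'M[R]_n) (M : 'M[R]_n) : Prop :=
  exists c : nat -> R, (forall i, c i \is Num.real) /\
    M = \sum_(0 <= i < m.+1) c i *: qbasis A i.

Definition qindep (R : numClosedFieldType) n m (A : nat -> 'M[R]_n) : Prop :=
  forall c : nat -> R, (forall i, c i \is Num.real) ->
    \sum_(0 <= i < m.+1) c i *: qbasis A i = 0 -> forall i, (i <= m)%N -> c i = 0.

Definition orth_proj_onto (R : numClosedFieldType) n (P C : 'M[R]_n) : Prop :=
  selfadj P /\ P *m P = P /\ (P == C)%MS.

(* C (row space) is a code of the quantum graph with edge space E. *)
Definition is_code (R : numClosedFieldType) n (E : 'M[R]_n -> Prop) (C : 'M[R]_n) : Prop :=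
  exists P : 'M[R]_n, orth_proj_onto P C /\
    exists eps : 'M[R]_n -> R, forall M, E M ->
      eps M \is Num.real /\ P *m M *m P = eps M *: P.

Definition wrap1n (k n : nat) : nat := ((k.-1 %% n).+1)%N.

Definition ceil_div (a b : nat) : nat := ((a + b.-1) %/ b)%N.

Definition shift_s (n m i : nat) : nat :=
  if (1 <= i <= n %% m)%N then (n %/ m).+1 else (n %/ m)%N.

From HB Require Import structures.
From mathcomp Require Import all_boot all_order all_algebra.
From mathcomp Require Import zify.
Import Order.TTheory GRing.Theory Num.Theory.
Local Open Scope ring_scope.
Set Implicit Arguments. Unset Strict Implicit. Unset Printing Implicit Defensive.

(* Let P project onto a code of dimension d, and let D be A_i written in its
   orthonormal eigenbasis, ordered by decreasing eigenvalue, with Q the matrix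
   of P in that basis; the code condition says Q D Q = eps Q. Comparing
   diagonal entries gives lambda_k Q_kk <= eps, and comparing traces, where
   only d - 1 eigenvalues exceed lambda_d, gives eps <= n lambda_d. As
   lambda_d n^2 < lambda_j for j < d, the top d - 1 eigenvectors of every A_i
   have weight Q_kk < 1/n. By (iv) these are min(n, m(d - 1)) distinct basis
   vectors, whereas a projection of trace d has at most n - d diagonal entries
   below 1/n; so m(d - 1) + d <= n. *)

Lemma mxtrace_pid (F : fieldType) n r :
  (r <= n)%N -> \tr (pid_mx r : 'M[F]_n) = r%:R.
Proof.
move=> rn; rewrite /mxtrace; under eq_bigr do rewrite mxE eqxx /=.
rewrite -natr_sum -(big_mkord xpredT (fun i => nat_of_bool (i < r)%N)).
rewrite (@big_cat_nat _ _ _ r) //= (@eq_big_nat _ _ _ 0 r _ (fun=> 1%N)).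
  rewrite (@eq_big_nat _ _ _ r n _ (fun=> 0%N)) => [|i /andP[/leq_gtF->]//].
  by rewrite sum_nat_const_nat big1_eq addn0 muln1 subn0.
by move=> i /andP[_ ->].
Qed.

Lemma mxtrace_idem (F : fieldType) n (Q : 'M[F]_n) :
  Q *m Q = Q -> \tr Q = (\rank Q)%:R.
Proof.
(* In the decomposition Q = L p U, idempotence reads p (U L) p = p. *)
move=> QQ; have rn := rank_leq_col Q; have eQ := mulmx_ebase Q.
have Lu : col_ebase Q \in unitmx by apply: col_ebase_unit.
have Uu : row_ebase Q \in unitmx by apply: row_ebase_unit.
move: eQ; set L := col_ebase Q; set U := row_ebase Q; set p := pid_mx _ => eQ.
have pULp : p *m (U *m L) *m p = p.
  apply: (can_inj (mulKmx Lu)); apply: (can_inj (mulmxK Uu)).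
  by rewrite !mulmxA eQ -!mulmxA [L *m _]mulmxA eQ QQ.
have pp : p *m p = p by rewrite pid_mx_id.
rewrite -{1}eQ mxtrace_mulC mulmxA -{1}pp mulmxA mxtrace_mulC.
by rewrite !mulmxA -(mulmxA _ U L) pULp mxtrace_pid.
Qed.

Lemma adjmxM (R : numClosedFieldType) p q r (A : 'M[R]_(p, q)) (B : 'M[R]_(q, r)) :
  adjmx (A *m B) = adjmx B *m adjmx A.
Proof. by rewrite /adjmx trmx_mul map_mxM. Qed.

Lemma adjmxK (R : numClosedFieldType) p q (A : 'M[R]_(p, q)) : adjmx (adjmx A) = A.
Proof. by apply/matrixP => i j; rewrite !mxE conjCK. Qed.

Section OrthogonalProjection.
Variables (R : numClosedFieldType) (n : nat) (Q : 'M[R]_n).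
Hypotheses (Qsa : selfadj Q) (QQ : Q *m Q = Q).

Lemma proj_entryC k l : Q l k = (Q k l)^*.
Proof. by rewrite -[in LHS]Qsa mxE mxE. Qed.

Lemma proj_diagE k : Q k k = \sum_l `|Q k l| ^+ 2.
Proof.
by rewrite -[in LHS]QQ mxE; apply: eq_bigr => l _; rewrite normCK (proj_entryC k l).
Qed.

Lemma proj_diag_ge0 k : 0 <= Q k k.
Proof. by rewrite proj_diagE sumr_ge0 // => l _; rewrite exprn_ge0. Qed.

Lemma proj_diag_le1 k : Q k k <= 1.
Proof.
have Qkk2 : Q k k ^+ 2 <= Q k k.
  rewrite [leRHS]proj_diagE (bigD1 k) //= ger0_norm ?proj_diag_ge0 // lerDl.
  by rewrite sumr_ge0 // => l _; rewrite exprn_ge0.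
have [->|Qkk_neq0] := eqVneq (Q k k) 0; first by rewrite ler01.
have Qkk_gt0 : 0 < Q k k by rewrite lt_def Qkk_neq0 proj_diag_ge0.
by rewrite -(ler_pM2l Qkk_gt0) mulr1 -expr2.
Qed.

Lemma proj_light_card (T : {set 'I_n}) :
  {in T, forall k, Q k k * n%:R < 1} -> (#|T| + \rank Q <= n)%N.
Proof.
move=> Tlight; have [-> | [k0 k0T]] := set_0Vmem T.
  by rewrite cards0 rank_leq_col.
have n_gt0 : 0 < n%:R :> R by rewrite ltr0n (leq_ltn_trans _ (ltn_ord k0)).
have light : \sum_(k in T) Q k k * n%:R < #|T|%:R.
  rewrite -sum1_card natr_sum ltr_sum //; apply/hasP.
  by exists k0; rewrite ?mem_index_enum.
have heavy : \sum_(k | k \notin T) Q k k * n%:R <= n%:R *+ #|[predC T]|.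
  rewrite -sumr_const; apply: ler_sum => k _.
  by rewrite ler_piMl ?proj_diag_le1 ?ltW.
have trQ : (\rank Q)%:R * n%:R = \sum_(k in T) Q k k * n%:R
                                 + \sum_(k | k \notin T) Q k k * n%:R.
  by rewrite -(mxtrace_idem QQ) mulr_suml (bigID (mem T)).
have := ltr_leD light heavy.
rewrite -trQ -[n%:R *+ _]mulr_natr -!natrM -natrD ltr_nat.
by have := cardC T; rewrite card_ord; nia.
Qed.

Variables (lk : 'I_n -> R) (eps : R).
Hypotheses (lk_ge0 : forall k, 0 <= lk k)
  (QDQ : Q *m diag_mx (\row_k lk k) *m Q = eps *: Q).

Lemma compress_diagE k : eps * Q k k = \sum_l lk l * `|Q k l| ^+ 2.
Proof.
have := congr1 (fun M : 'M[R]_n => M k k) QDQ; rewrite /= [in RHS]mxE => <-.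
rewrite mul_mx_diag mxE; apply: eq_bigr => l _.
by rewrite !mxE normCK (proj_entryC k l) mulrCA mulrA.
Qed.

Lemma compress_trace : eps * (\rank Q)%:R = \sum_k lk k * Q k k.
Proof.
rewrite -(mxtrace_idem QQ) mulr_sumr.
under eq_bigr do rewrite compress_diagE.
rewrite exchange_big /=; apply: eq_bigr => l _.
rewrite -mulr_sumr proj_diagE; congr (_ * _); apply: eq_bigr => k _.
by rewrite (proj_entryC k l) norm_conjC.
Qed.

Lemma compress_ge0 : (0 < \rank Q)%N -> 0 <= eps.
Proof.
move=> rQ_gt0; rewrite -(pmulr_lge0 _ (ltr0Sn _ (\rank Q).-1)) prednK //.
by rewrite compress_trace sumr_ge0 // => k _; rewrite mulr_ge0 ?proj_diag_ge0.
Qed.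

Lemma compress_diag_le k : (0 < \rank Q)%N -> lk k * Q k k <= eps.
Proof.
move=> rQ_gt0; have [->|Qkk_neq0] := eqVneq (Q k k) 0.
  by rewrite mulr0 compress_ge0.
have Qkk_gt0 : 0 < Q k k by rewrite lt_def Qkk_neq0 proj_diag_ge0.
rewrite -(ler_pM2r Qkk_gt0) -mulrA -expr2 compress_diagE (bigD1 k) //=.
rewrite ger0_norm ?proj_diag_ge0 // lerDl sumr_ge0 // => l _.
by rewrite mulr_ge0 ?exprn_ge0.
Qed.

Lemma compress_le (c : R) (B : {set 'I_n}) :
  0 <= c -> (#|B| < \rank Q)%N -> (forall k, k \notin B -> lk k <= c) ->
  eps <= c *+ n.
Proof.
move=> c_ge0 ltBr lkB; have rQ_gt0 : (0 < \rank Q)%N by apply: leq_ltn_trans ltBr.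
have inB : \sum_(k in B) lk k * Q k k <= eps *+ #|B|.
  by rewrite -sumr_const ler_sum // => k _; rewrite compress_diag_le.
have outB : \sum_(k | k \notin B) lk k * Q k k <= c *+ n.
  apply: le_trans (_ : c *+ #|[predC B]| <= _); last first.
    by rewrite ler_wpMn2l // (leq_trans (max_card _)) ?card_ord.
  rewrite -sumr_const ler_sum // => k kB.
  by rewrite (le_trans (ler_wpM2r (proj_diag_ge0 k) (lkB k kB))) ?ler_piMr ?proj_diag_le1.
have splitB : \sum_k lk k * Q k k = \sum_(k in B) lk k * Q k k
                                   + \sum_(k | k \notin B) lk k * Q k k.
  by rewrite (bigID (mem B)).
have := lerD inB outB; rewrite -splitB -compress_trace mulr_natr.
rewrite -(subnKC (ltnW ltBr)) mulrnDr lerD2l; apply: le_trans.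
by rewrite -{1}(mulr1n eps) ler_wpMn2l ?compress_ge0 // subn_gt0.
Qed.

End OrthogonalProjection.

Section GeometricDecay.
Variables (R : numDomainType) (n : nat) (l : nat -> R).
Hypotheses (l_gt0 : forall t, (t < n)%N -> 0 < l t)
  (l_decay : forall t, (t.+1 < n)%N -> l t.+1 * (n ^ 2)%:R < l t).

Lemma decay_le s t : (s <= t < n)%N -> l t <= l s.
Proof.
move=> /andP[]; elim: t => [|t IHt]; first by rewrite leqn0 => /eqP->.
rewrite leq_eqVlt => /orP[/eqP-> //|lt_st lt_tn].
apply: le_trans (IHt lt_st (ltnW lt_tn)); apply: le_trans (ltW (l_decay lt_tn)).
by apply: ler_peMr; [rewrite ltW ?l_gt0 | rewrite ler1n expn_gt0; lia].
Qed.

Lemma decay_lt s t : (s < t < n)%N -> l t * (n ^ 2)%:R < l s.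
Proof.
move=> /andP[lt_st lt_tn]; apply: le_lt_trans (l_decay (leq_ltn_trans lt_st lt_tn)).
by rewrite ler_pM2r ?ltr0n ?expn_gt0 ?(leq_ltn_trans _ lt_tn) // decay_le ?lt_st.
Qed.

End GeometricDecay.

Lemma compress_decay_light (R : numClosedFieldType) n (Q : 'M[R]_n)
    (l : nat -> R) (eps : R) :
  selfadj Q -> Q *m Q = Q ->
  (forall t, (t < n)%N -> 0 < l t) ->
  (forall t, (t.+1 < n)%N -> l t.+1 * (n ^ 2)%:R < l t) ->
  Q *m diag_mx (\row_(t < n) l t) *m Q = eps *: Q ->
  forall t : 'I_n, (t < (\rank Q).-1)%N -> Q t t * n%:R < 1.
Proof.
move=> Qsa QQ l_gt0 l_decay QDQ t lt_t_r.
have lt_r_n : ((\rank Q).-1 < n)%N by have := rank_leq_col Q; lia.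
pose B := [set widen_ord (ltnW lt_r_n) s | s : 'I_(\rank Q).-1].
have eps_le : eps <= l (\rank Q).-1 *+ n.
  apply: (compress_le Qsa QQ _ QDQ (B := B)) => [k|||k].
  - by rewrite ltW ?l_gt0.
  - by rewrite ltW ?l_gt0.
  - by rewrite (leq_ltn_trans (leq_imset_card _ _)) // card_ord; lia.
  - move=> kB; rewrite (decay_le l_gt0 l_decay) // ltn_ord andbT leqNgt.
    apply: contra kB => lt_k_r; apply/imsetP.
    by exists (Ordinal lt_k_r); last by apply: val_inj.
have lt_tn : (t < n)%N := ltn_ord t.
have t_le : l t * Q t t <= eps.
  by apply: (compress_diag_le Qsa QQ _ QDQ) => [k|]; rewrite ?ltW ?l_gt0 //; lia.
rewrite -(ltr_pM2l (l_gt0 _ lt_tn)) mulr1 mulrA.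
apply: le_lt_trans (decay_lt l_gt0 l_decay _ : l (\rank Q).-1 * _ < _); last by rewrite lt_t_r.
have n_gt0 : 0 < n%:R :> R by rewrite ltr0n; lia.
rewrite (le_trans (_ : _ <= eps * n%:R)) ?ler_pM2r //.
by rewrite natrX expr2 mulrA ler_pM2r // mulr_natr.
Qed.

Section UnitaryConjugation.
Variables (R : numClosedFieldType) (n : nat) (M : 'M[R]_n).
Hypothesis Mu : M \is unitarymx.

Let MtM : adjmx M *m M = 1%:M. Proof. exact/mulmx1C/unitarymxP. Qed.

Lemma unitary_conjM X Y :
  M *m X *m adjmx M *m (M *m Y *m adjmx M) = M *m (X *m Y) *m adjmx M.
Proof. by rewrite !mulmxA -(mulmxA _ (adjmx M)) MtM mulmx1. Qed.

Lemma adjmx_unitary_conj X : adjmx (M *m X *m adjmx M) = M *m adjmx X *m adjmx M.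
Proof. by rewrite !adjmxM adjmxK mulmxA. Qed.

Lemma selfadj_unitary_conj X : selfadj X -> selfadj (M *m X *m adjmx M).
Proof. by rewrite /selfadj adjmx_unitary_conj => ->. Qed.

Lemma idem_unitary_conj X :
  X *m X = X -> M *m X *m adjmx M *m (M *m X *m adjmx M) = M *m X *m adjmx M.
Proof. by rewrite unitary_conjM => ->. Qed.

Lemma mxrank_unitary_conj X : \rank (M *m X *m adjmx M) = \rank X.
Proof.
have Mfull : row_full M by rewrite row_full_unit unitarymx_unit.
have Mtfree : row_free (adjmx M) by rewrite row_free_unit unitarymx_unit ?trmxC_unitary.
by rewrite mxrankMfree // (eqmxMfull _ Mfull).
Qed.

End UnitaryConjugation.

Lemma orthonormal_unitarymx (R : numClosedFieldType) p q r
    (u : 'I_p -> 'rV[R]_q) (s : 'I_r -> 'I_p) :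
  (forall k l, u k *m adjmx (u l) = (k == l)%:R%:M) -> injective s ->
  \matrix_t u (s t) \is unitarymx.
Proof.
move=> u_orth s_inj; apply/unitarymxP/matrixP => t t'.
have := congr1 (fun N : 'M_1 => N 0 0) (u_orth (s t) (s t')).
rewrite /= !mxE (inj_eq s_inj) eqxx mulr1n => <-.
by apply: eq_bigr => j _; rewrite !mxE.
Qed.

Lemma eigenrows_diag (R : numClosedFieldType) p n (M : 'M[R]_(p, n))
    (A : 'M[R]_n) (l : 'I_p -> R) :
  M \is unitarymx -> (forall t, row t M *m A = l t *: row t M) ->
  M *m A *m adjmx M = diag_mx (\row_t l t).
Proof.
move=> Mu Meig; have -> : M *m A = diag_mx (\row_t l t) *m M.
  by apply/row_matrixP => t; rewrite !row_mul Meig row_diag_mx -scalemxAl -rowE mxE.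
by rewrite -mulmxA (unitarymxP Mu) mulmx1.
Qed.

Lemma conj_mx_diag (R : numClosedFieldType) p n (M : 'M[R]_(p, n)) X t :
  (M *m X *m adjmx M) t t = (row t M *m X *m adjmx (row t M)) 0 0.
Proof.
rewrite !mxE; apply: eq_bigr => j _; rewrite !mxE; congr (_ * _).
by apply: eq_bigr => k _; rewrite !mxE.
Qed.

Lemma proj_light_card_basis (R : numClosedFieldType) n (P : 'M[R]_n)
    (u : 'I_n -> 'rV[R]_n) (T : {set 'I_n}) :
  selfadj P -> P *m P = P ->
  (forall k k', u k *m adjmx (u k') = (k == k')%:R%:M) ->
  {in T, forall k, (u k *m P *m adjmx (u k)) 0 0 * n%:R < 1} ->
  (#|T| + \rank P <= n)%N.
Proof.
move=> Psa PP u_orth Tlight; pose M := \matrix_k u k.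
have Mu : M \is unitarymx by exact: (orthonormal_unitarymx (s := id)).
rewrite -(mxrank_unitary_conj Mu); apply: proj_light_card.
- exact: selfadj_unitary_conj.
- exact: idem_unitary_conj.
by move=> k /Tlight; rewrite -(rowK u k) -conj_mx_diag.
Qed.

Lemma compress_eigenbasis_light (R : numClosedFieldType) n (P A : 'M[R]_n)
    (u : 'I_n -> 'rV[R]_n) (s : 'I_n -> 'I_n) (l : nat -> R) (eps : R) :
  selfadj P -> P *m P = P ->
  (forall k k', u k *m adjmx (u k') = (k == k')%:R%:M) -> injective s ->
  (forall t : 'I_n, u (s t) *m A = l t *: u (s t)) ->
  (forall t, (t < n)%N -> 0 < l t) ->
  (forall t, (t.+1 < n)%N -> l t.+1 * (n ^ 2)%:R < l t) ->
  P *m A *m P = eps *: P ->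
  forall t : 'I_n, (t < (\rank P).-1)%N ->
    (u (s t) *m P *m adjmx (u (s t))) 0 0 * n%:R < 1.
Proof.
move=> Psa PP u_orth s_inj u_eig l_gt0 l_decay PAP t.
pose M := \matrix_t u (s t); have Mu : M \is unitarymx by exact: orthonormal_unitarymx.
have MAM : M *m A *m adjmx M = diag_mx (\row_(t < n) l t).
  by apply: eigenrows_diag => // t'; rewrite rowK.
pose Q := M *m P *m adjmx M.
have Qsa : selfadj Q by exact: selfadj_unitary_conj.
have QQ : Q *m Q = Q by exact: idem_unitary_conj.
have QDQ : Q *m diag_mx (\row_(t < n) l t) *m Q = eps *: Q.
  by rewrite -MAM !unitary_conjM // PAP -scalemxAr -scalemxAl.
rewrite -(mxrank_unitary_conj Mu) -(rowK (fun t => u (s t)) t) -conj_mx_diag.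
exact: compress_decay_light QDQ t.
Qed.

Lemma ratio_decay (R : numFieldType) n (l : nat -> R) :
  (2 <= n)%N ->
  (forall j, (1 <= j < n)%N -> 0 < l j.+1 /\ l j.+1 < l j / (n ^ 2)%:R) ->
  (forall t, (t < n)%N -> 0 < l t.+1) /\
  (forall t, (t.+1 < n)%N -> l t.+2 * (n ^ 2)%:R < l t.+1).
Proof.
move=> n2 l_ratio; have nn_gt0 : 0 < (n ^ 2)%:R :> R by rewrite ltr0n expn_gt0; lia.
have l_decay t : (t.+1 < n)%N -> l t.+2 * (n ^ 2)%:R < l t.+1.
  by move=> lt_tn; rewrite -ltr_pdivlMr //; case: (l_ratio t.+1 lt_tn).
split=> // -[|t] lt_tn; last by case: (l_ratio t.+1); rewrite ?lt_tn.
have [l2_gt0 _] := l_ratio 1%N n2.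
by rewrite (lt_trans _ (l_decay 0%N n2)) // mulr_gt0.
Qed.

Lemma leq_card_inj_on n L (e : nat -> 'I_n) (T : {set 'I_n}) :
  (forall l1 l2, (1 <= l1 <= L)%N -> (1 <= l2 <= L)%N -> e l1 = e l2 -> l1 = l2) ->
  (forall l, (1 <= l <= L)%N -> e l \in T) -> (L <= #|T|)%N.
Proof.
move=> e_inj eT; pose h (t : 'I_L) := e t.+1.
have h_inj : injective h.
  by move=> t t' /e_inj eq_tt'; apply/val_inj/succn_inj/eq_tt'; rewrite /= ltn_ord.
rewrite -[X in (X <= _)%N]card_ord -(card_imset _ h_inj) subset_leq_card //.
by apply/subsetP => _ /imsetP[t _ ->]; apply: eT; rewrite /= ltn_ord.
Qed.

Lemma leq_ceil_div n m d :
  (minn n (m * d.-1) + d <= n)%N -> (d <= ceil_div n m.+1)%N.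
Proof. by rewrite /ceil_div leq_divRL //; nia. Qed.

Lemma qspan_basis (R : numClosedFieldType) n m (A : nat -> 'M[R]_n) i :
  (1 <= i <= m)%N -> qspan m A (A i).
Proof.
move=> /andP[i_gt0 le_im]; exists (fun k => (k == i)%:R); split=> [k|].
  exact: realn.
rewrite big_mkord (bigD1 (@Ordinal m.+1 i le_im)) //= eqxx scale1r.
rewrite /qbasis gtn_eqF // big1 ?addr0 // => k.
by rewrite -val_eqE /= => /negbTE->; rewrite scale0r.
Qed.

Unset Implicit Arguments.
Theorem proposition1 (R : numClosedFieldType) (n m : nat)
    (A : nat -> 'M[R]_n)               (* A 1, ..., A m *)
    (u : 'I_n -> 'rV[R]_n)
    (lam : nat -> nat -> R)            (* lam i j = lambda_{i,j}, 1-based *)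
    (w : nat -> nat -> 'I_n)           (* w_{i,j} = u (w i j), 1-based *)
  : (2 <= n)%N -> (1 <= m <= n.-1)%N ->
    (forall i, (1 <= i <= m)%N -> selfadj (A i)) ->
    qindep m A ->
    (* (i) commutative *)
    (forall M N, qspan m A M -> qspan m A N -> M *m N = N *m M) ->
    (* (ii) tropical *)
    (forall k l : 'I_n, u k *m adjmx (u l) = (k == l)%:R%:M) ->
    (forall i j1 j2, (1 <= i <= m)%N -> (1 <= j1 <= n)%N -> (1 <= j2 <= n)%N ->
        w i j1 = w i j2 -> j1 = j2) ->
    (forall i j, (1 <= i <= m)%N -> (1 <= j <= n)%N ->
        u (w i j) *m A i = lam i j *: u (w i j)) ->
    (forall i j, (1 <= i <= m)%N -> (1 <= j < n)%N ->
        0 < lam i j.+1 /\ lam i j.+1 < lam i j / (n ^ 2)%:R) ->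
    (* (iii) cyclical *)
    (forall i j, (1 <= i < m)%N -> (1 <= j <= n)%N ->
        w i.+1 j = w i (wrap1n (j + shift_s n m i) n)) ->
    (* (iv) enumeration *)
    (exists e : nat -> 'I_n,
        (forall l1 l2, (1 <= l1 <= n)%N -> (1 <= l2 <= n)%N -> e l1 = e l2 -> l1 = l2) /\
        (forall l, (1 <= l <= n)%N ->
           exists i, (1 <= i <= m)%N /\ e l = w i (ceil_div l m))) ->
    forall C : 'M[R]_n, is_code (qspan m A) C ->
      (\rank C <= ceil_div n m.+1)%N.
Proof.
move=> n2 /andP[m_gt0 _] _ _ _ u_orth w_inj w_eig lam_ratio _ [e [e_inj e_w]].
move=> C [P [[Psa [PP PC]] [eps P_eps]]]; rewrite -(eqmx_rank PC).
pose weight k := (u k *m P *m adjmx (u k)) 0 0.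
have light i j : (1 <= i <= m)%N -> (0 < j < \rank P)%N -> weight (w i j) * n%:R < 1.
  move=> im /andP[j_gt0 lt_jr]; have [_ PAP] := P_eps _ (qspan_basis A im).
  have [lam_gt0 lam_decay] := ratio_decay n2 (lam_ratio i ^~ im).
  have lt_jn : (j.-1 < n)%N by have := rank_leq_col P; lia.
  have w_inj_i : injective (fun t : 'I_n => w i t.+1).
    by move=> t t' /w_inj eq_tt'; apply/val_inj/succn_inj/eq_tt'; rewrite /= ?ltn_ord.
  have := compress_eigenbasis_light Psa PP u_orth w_inj_i _ lam_gt0 lam_decay PAP.
  move/(_ _ (Ordinal lt_jn)); rewrite /= prednK //; apply; last by lia.
  by move=> t; apply: w_eig; rewrite /= ?ltn_ord.
pose T := [set k | weight k * n%:R < 1].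
have le_T_n : (#|T| + \rank P <= n)%N.
  by apply: proj_light_card_basis => // k; rewrite inE.
apply: leq_ceil_div; apply: leq_trans le_T_n; rewrite leq_add2r.
apply: (leq_card_inj_on (e := e)) => [l1 l2 l1L l2L | l lL]; first by apply: e_inj; lia.
have [|i [im ->]] := e_w l; first by lia.
rewrite inE light // /ceil_div divn_gt0 // ltn_divLR //; nia.
Qed.
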